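(* Let $\mathcal{V}$ be a real vector space of dimension $d$, let $\tau\in\vee^2\mathcal{V}^*$ have rank $p+1$ and Lorentzian signature, and let $Lf_p(\mathcal{V},\tau)=\{(\tau_0,\dots,\tau_p)\in\mathcal{V}^{p+1}:\tau(\tau_A,\tau_B)=\eta_{AB}\}$ be the space of longitudinal frames. Then the longitudinal group $LG_p$, realised as the set of pairs $(\Lambda,V)$ with $\Lambda\in O(1,p)$ and $V=(V_0,\dots,V_p)\in\mathrm{Ker}(\tau)^{p+1}$, acts on $Lf_p(\mathcal{V},\tau)$ from the right by $\tau_A\cdot(\Lambda,V)={\Lambda^A}_B\tau_A+V_B$, and this action is free and transitive: for every $\tau_A,\tau'_A\in Lf_p(\mathcal{V},\tau)$ there is exactly one pair $(\Lambda,V)$ with $\tau'_B={\Lambda^A}_B\tau_A+V_B$. Thus $Lf_p(\mathcal{V},\tau)$ is an $LG_p$-torsor.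
   Context: $\eta_{AB}=\mathrm{diag}(-1,1,\dots,1)$; $\mathrm{Ker}(\tau)=\{v\in\mathcal{V}:\tau(v,\cdot)=0\}$, of dimension $d-p-1$. The longitudinal group $LG_p$ is the group of block matrices $\begin{pmatrix}\Lambda&0\\ v&\mathbb{1}\end{pmatrix}$ with $\Lambda\in O(1,p)$ and $v\in\mathbb{R}^{(d-p-1)\times(p+1)}$; its action on longitudinal frames is expressed with $V_B={v^i}_Be_i$ for a basis $e_i$ of $\mathrm{Ker}(\tau)$. *)

From HB Require Import structures.
From mathcomp Require Import all_boot all_order all_algebra.
From mathcomp Require Import reals.
Set Implicit Arguments. Unset Strict Implicit. Unset Printing Implicit Defensive.
Import Order.TTheory GRing.Theory Num.Theory.
Local Open Scope ring_scope.

(* The vector space V of dimension d is modelled as row vectors 'rV[R]_d;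
   a symmetric bilinear form tau on V is given by its Gram matrix T. *)
Definition tau (R : realType) (d : nat) (T : 'M[R]_d) (u w : 'rV[R]_d) : R :=
  (u *m T *m w^T) 0 0.

Definition eta (R : realType) (p : nat) : 'M[R]_(p.+1) :=
  \matrix_(A, B) (if A == B then (if A == ord0 then -1 else 1) else 0).

Definition lorentz_canon (R : realType) (d p : nat) : 'M[R]_d :=
  \matrix_(i, j) (if i == j then
                    (if (i : nat) == 0%N then -1 else if (i < p.+1)%N then 1 else 0)
                  else 0).

(* tau is symmetric, of rank p+1 and of Lorentzian signature (1,p)
   (Sylvester normal form diag(-1,1,..,1,0,..,0)). *)
Definition lorentzian_rank (R : realType) (d p : nat) (T : 'M[R]_d) : Prop :=
  T^T = T /\ (p.+1 <= d)%N /\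
  exists P : 'M[R]_d, P \in unitmx /\ T = P^T *m lorentz_canon R d p *m P.

Definition in_ker (R : realType) (d : nat) (T : 'M[R]_d) (v : 'rV[R]_d) : Prop :=
  forall w, tau T v w = 0.

Definition long_frame (R : realType) (d p : nat) (T : 'M[R]_d)
  (F : 'M[R]_(p.+1, d)) : Prop :=
  forall A B : 'I_p.+1, tau T (row A F) (row B F) = eta R p A B.

Definition lorentz_group (R : realType) (p : nat) (L : 'M[R]_(p.+1)) : Prop :=
  L^T *m eta R p *m L = eta R p.

Definition ker_tuple (R : realType) (d p : nat) (T : 'M[R]_d)
  (V : 'M[R]_(p.+1, d)) : Prop :=
  forall B : 'I_p.+1, in_ker T (row B V).

Definition in_LG (R : realType) (d p : nat) (T : 'M[R]_d)
  (L : 'M[R]_(p.+1)) (V : 'M[R]_(p.+1, d)) : Prop :=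
  lorentz_group L /\ ker_tuple T V.

Definition lact (R : realType) (d p : nat) (F : 'M[R]_(p.+1, d))
  (L : 'M[R]_(p.+1)) (V : 'M[R]_(p.+1, d)) : 'M[R]_(p.+1, d) :=
  \matrix_(B < p.+1) (\sum_(A < p.+1) L A B *: row A F + row B V).

(* group law of LG_p in pair form (product of block matrices
   [[Lambda,0],[v,1]]): (L,V)(L',V') = (L L', V.L' + V') with
   (V.L')_B = L'^A_B V_A *)
Definition lg_mul (R : realType) (d p : nat)
  (x y : 'M[R]_(p.+1) * 'M[R]_(p.+1, d)) : 'M[R]_(p.+1) * 'M[R]_(p.+1, d) :=
  (x.1 *m y.1, \matrix_(B < p.+1) (\sum_(A < p.+1) y.1 A B *: row A x.2) + y.2).

From Pilot Require Import Defs.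
From HB Require Import structures.
From mathcomp Require Import all_boot all_order all_algebra.
From mathcomp Require Import reals.
Set Implicit Arguments. Unset Strict Implicit. Unset Printing Implicit Defensive.
Import Order.TTheory GRing.Theory Num.Theory.
Local Open Scope ring_scope.

(* In matrix form a frame F (rows tau_A) has Gram matrix F T F^T = eta, and
   the action is F |-> L^T F + V.  Since tau has rank p+1 and F T has rank
   p+1, the rows of F T span the row space of T, which yields the projection
   identity T F^T eta F T = T.  The transition from F to F' is then forced:
   L^T = F' T F^T eta and V = F' - L^T F; the projection identity shows that
   this L is a Lorentz transformation and that V takes values in Ker(tau). *)

Section SymmetricGram.
Variables (K : comPzRingType) (d : nat) (T : 'M[K]_d).
Hypothesis T_sym : T^T = T.

Lemma sym_ker_trmx m (V : 'M[K]_(m, d)) : V *m T = 0 -> T *m V^T = 0.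
Proof. by move=> VT0; rewrite -T_sym -trmx_mul VT0 trmx0. Qed.

Lemma gram_affine m n (F : 'M[K]_(n, d)) (V : 'M[K]_(m, d)) (M : 'M[K]_(m, n)) :
  V *m T = 0 ->
  (M *m F + V) *m T *m (M *m F + V)^T = M *m (F *m T *m F^T) *m M^T.
Proof.
move=> VT0; rewrite linearD /= !mulmxDl VT0 mul0mx addr0 !mulmxDr.
by rewrite -[_ *m V^T]mulmxA sym_ker_trmx // mulmx0 addr0 trmx_mul !mulmxA.
Qed.

End SymmetricGram.

Section FrameTransition.
Variables (K : fieldType) (n d : nat) (T : 'M[K]_d) (E : 'M[K]_n).
Hypotheses (T_sym : T^T = T) (E_sym : E^T = E) (EE : E *m E = 1%:M).

Lemma gram_inv_sandwich {G : 'M[K]_(n, d)} :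
  (\rank T <= n)%N -> G *m T *m G^T = E -> T *m G^T *m E *m G *m T = T.
Proof.
move=> rankT GramG.
have GT_sub_T : (G *m T <= T)%MS by apply: submxMl.
have rank_GT : (n <= \rank (G *m T))%N.
  rewrite -{1}(mxrank1 K n) -EE -GramG.
  exact: leq_trans (mxrankM_maxl _ _) (mxrankM_maxl _ _).
have /submxP[X T_GT] : (T <= G *m T)%MS.
  by rewrite -(mxrank_leqif_sup GT_sub_T).2 eqn_leq mxrankS //= (leq_trans rankT).
rewrite {1}T_GT.
have -> : X *m (G *m T) *m G^T *m E *m G *m T
        = X *m (G *m T *m G^T *m E) *m (G *m T) by rewrite !mulmxA.
by rewrite GramG EE mulmx1 -T_GT.
Qed.

Definition frame_transition (F F' : 'M[K]_(n, d)) : 'M[K]_n := F' *m T *m F^T *m E.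

Lemma frame_transition_affine (M : 'M[K]_n) (F V : 'M[K]_(n, d)) :
  F *m T *m F^T = E -> V *m T = 0 -> frame_transition F (M *m F + V) = M.
Proof.
move=> GramF VT0; rewrite /frame_transition mulmxDl VT0 addr0.
by rewrite -2!(mulmxA M) GramF -mulmxA EE mulmx1.
Qed.

Variables F F' : 'M[K]_(n, d).
Hypotheses (GramF : F *m T *m F^T = E) (GramF' : F' *m T *m F'^T = E).
Hypothesis rankT : (\rank T <= n)%N.

Let sandwichF := gram_inv_sandwich rankT GramF.

Lemma frame_transition_isometry :
  frame_transition F F' *m E *m (frame_transition F F')^T = E.
Proof.
rewrite /frame_transition !trmx_mul E_sym T_sym !trmxK.
transitivity (F' *m (T *m F^T *m (E *m E) *m E *m F *m T) *m F'^T).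
  by rewrite !mulmxA.
by rewrite EE mulmx1 sandwichF GramF'.
Qed.

Lemma frame_transition_ker : (F' - frame_transition F F' *m F) *m T = 0.
Proof.
rewrite mulmxBl /frame_transition.
have -> : F' *m T *m F^T *m E *m F *m T = F' *m (T *m F^T *m E *m F *m T).
  by rewrite !mulmxA.
by rewrite sandwichF subrr.
Qed.

End FrameTransition.

Arguments frame_transition {K n d}.

Lemma eta_tr (R : realType) p : (Defs.eta R p)^T = Defs.eta R p.
Proof. by apply/matrixP => i j; rewrite !mxE eq_sym; case: eqP => // ->. Qed.

Lemma eta_mul_eta (R : realType) p : Defs.eta R p *m Defs.eta R p = 1%:M.
Proof.
apply/matrixP => i j; rewrite !mxE (bigD1 i) //= big1 => [|k /negbTE ik].
  rewrite !mxE eqxx addr0; have [->|_] := eqVneq i j; last by rewrite mulr0.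
  by case: (j == ord0); rewrite ?mulrNN mulr1.
by rewrite !mxE eq_sym ik mul0r.
Qed.

Section LongitudinalFrames.
Variables (R : realType) (d p : nat) (T : 'M[R]_d).

Lemma tau_rowE m n (X : 'M[R]_(m, d)) (Y : 'M[R]_(n, d)) A B :
  tau T (row A X) (row B Y) = (X *m T *m Y^T) A B.
Proof. by rewrite /tau -row_mul tr_row colE mulmxA -row_mul -mulmxA -colE !mxE. Qed.

Lemma long_frameE (F : 'M[R]_(p.+1, d)) :
  long_frame T F <-> F *m T *m F^T = Defs.eta R p.
Proof.
split=> [frameF | GramF A B]; last by rewrite tau_rowE GramF.
by apply/matrixP => A B; rewrite -tau_rowE frameF.
Qed.

Lemma in_kerE (v : 'rV[R]_d) : in_ker T v <-> v *m T = 0.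
Proof.
split=> [kerv | vT0 w]; last by rewrite /tau vT0 mul0mx mxE.
apply/rowP => j; have := kerv (delta_mx 0 j).
by rewrite /tau trmx_delta -colE !mxE.
Qed.

Lemma ker_tupleE (V : 'M[R]_(p.+1, d)) : ker_tuple T V <-> V *m T = 0.
Proof.
split=> [kerV | VT0 B]; last by apply/in_kerE; rewrite -row_mul VT0 row0.
by apply/row_matrixP => B; rewrite row_mul row0; apply/in_kerE.
Qed.

Lemma lactE (F : 'M[R]_(p.+1, d)) L V : lact F L V = L^T *m F + V.
Proof.
apply/row_matrixP => B; rewrite rowK linearD /= row_mul mulmx_sum_row.
by congr (_ + _); apply: eq_bigr => A _; rewrite !mxE.
Qed.

Lemma lg_mul2E (L L' : 'M[R]_p.+1) (V V' : 'M[R]_(p.+1, d)) :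
  (lg_mul (L, V) (L', V')).2 = L'^T *m V + V'.
Proof.
congr (_ + _); apply/row_matrixP => B; rewrite rowK row_mul mulmx_sum_row.
by apply: eq_bigr => A _; rewrite !mxE.
Qed.

Lemma lorentz_canon_pid : lorentz_canon R d p *m pid_mx p.+1 = lorentz_canon R d p.
Proof.
apply/matrixP => i j; rewrite !mxE (bigD1 j) //= big1 => [|k kj].
  rewrite !mxE eqxx /= addr0; have [_|pj] := ltnP j p.+1; first by rewrite mulr1.
  have j_neq0 : (j == 0 :> nat) = false by apply/negbTE; rewrite -lt0n (leq_trans _ pj).
  by rewrite mulr0; case: eqP => // ->; rewrite j_neq0 ltnNge pj.
by rewrite !mxE val_eqE (negbTE kj) mulr0.
Qed.

Lemma lorentzian_rank_mxrank : @lorentzian_rank R d p T -> (\rank T <= p.+1)%N.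
Proof.
case=> _ [le_pd [P [_ ->]]].
apply: leq_trans (mxrankM_maxl _ _) _; apply: leq_trans (mxrankM_maxr _ _) _.
rewrite -lorentz_canon_pid; apply: leq_trans (mxrankM_maxr _ _) _.
by rewrite rank_pid_mx.
Qed.

End LongitudinalFrames.

Section LongitudinalAction.
Variables (R : realType) (d p : nat) (T : 'M[R]_d).
Hypothesis T_lorentzian : @lorentzian_rank R d p T.

Let T_sym : T^T = T. Proof. by case: T_lorentzian. Qed.

Lemma lact_long_frame (F : 'M[R]_(p.+1, d)) (L : 'M[R]_p.+1) (V : 'M[R]_(p.+1, d)) :
  long_frame T F -> in_LG T L V -> long_frame T (lact F L V).
Proof.
move=> /long_frameE GramF [L_lorentz /ker_tupleE VT0]; apply/long_frameE.
by rewrite lactE gram_affine // GramF trmxK L_lorentz.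
Qed.

Lemma lact1 (F : 'M[R]_(p.+1, d)) : lact F 1%:M 0 = F.
Proof. by rewrite lactE trmx1 mul1mx addr0. Qed.

Lemma lactM (F V V' : 'M[R]_(p.+1, d)) (L L' : 'M[R]_p.+1) :
  lact (lact F L V) L' V' =
  lact F (lg_mul (L, V) (L', V')).1 (lg_mul (L, V) (L', V')).2.
Proof. by rewrite !lactE lg_mul2E trmx_mul mulmxDr addrA mulmxA. Qed.

Lemma lact_transitive (F F' : 'M[R]_(p.+1, d)) :
  long_frame T F -> long_frame T F' ->
  let M := frame_transition T (Defs.eta R p) F F' in
  in_LG T M^T (F' - M *m F) /\ F' = lact F M^T (F' - M *m F).
Proof.
move=> /long_frameE GramF /long_frameE GramF' M.
have rankT := lorentzian_rank_mxrank T_lorentzian.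
split; last by rewrite lactE trmxK addrC subrK.
split; last by apply/ker_tupleE; exact: (frame_transition_ker (eta_mul_eta R p) F' GramF rankT).
rewrite /lorentz_group trmxK.
exact: (frame_transition_isometry T_sym (eta_tr R p) (eta_mul_eta R p) GramF GramF' rankT).
Qed.

Lemma lact_free (F V V2 : 'M[R]_(p.+1, d)) (L L2 : 'M[R]_p.+1) :
  long_frame T F -> ker_tuple T V -> ker_tuple T V2 ->
  lact F L V = lact F L2 V2 -> L = L2 /\ V = V2.
Proof.
move=> /long_frameE GramF /ker_tupleE VT0 /ker_tupleE V2T0; rewrite !lactE => eqFF.
have eqL : L^T = L2^T.
  by rewrite -(frame_transition_affine (eta_mul_eta R p) L^T GramF VT0) eqFF
             (frame_transition_affine (eta_mul_eta R p) L2^T GramF V2T0).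
by move: eqFF; rewrite eqL => /addrI; split => //; apply: trmx_inj.
Qed.

End LongitudinalAction.

Unset Implicit Arguments.

Theorem proposition2 (R : realType) (d p : nat) (T : 'M[R]_d) :
  @lorentzian_rank R d p T ->
  (* the action is well defined on Lf_p(V, tau) *)
  (forall (F : 'M[R]_(p.+1, d)) (L : 'M[R]_(p.+1)) (V : 'M[R]_(p.+1, d)), long_frame T F -> in_LG T L V -> long_frame T (lact F L V)) /\
  (* it is a right action *)
  (forall F : 'M[R]_(p.+1, d), lact F 1%:M 0 = F) /\
  (forall (F : 'M[R]_(p.+1, d)) (L L' : 'M[R]_(p.+1)) (V V' : 'M[R]_(p.+1, d)), in_LG T L V -> in_LG T L' V' ->
     lact (lact F L V) L' V' =
     lact F (lg_mul (L, V) (L', V')).1 (lg_mul (L, V) (L', V')).2) /\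
  (* it is free and transitive *)
  (forall F F' : 'M[R]_(p.+1, d), long_frame T F -> long_frame T F' ->
     exists (L : 'M[R]_(p.+1)) (V : 'M[R]_(p.+1, d)), (in_LG T L V /\ F' = lact F L V) /\
       forall (L2 : 'M[R]_(p.+1)) (V2 : 'M[R]_(p.+1, d)), in_LG T L2 V2 -> F' = lact F L2 V2 -> L2 = L /\ V2 = V).
Proof.
move=> T_lorentzian.
split; first exact: lact_long_frame T_lorentzian.
split; first exact: lact1.
split; first by move=> *; apply: lactM.
move=> F F' frameF frameF'.
have [LG_M F'E] := lact_transitive T_lorentzian frameF frameF'.
do 2 eexists; split; first by split; [exact: LG_M | exact: F'E].
move=> L2 V2 [_ kerV2] F'E2; case: LG_M => _ kerV.
by apply: (lact_free frameF kerV2 kerV); rewrite -F'E2.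
Qed.
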